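(* Let $F:\mathbb{R}^n\to\mathbb{R}$ be a convex differentiable function with a minimizer $x_*$, let $\xi^{(1)},\dots,\xi^{(T)}$ be i.i.d. random variables, let $\mu_x,\mu_y\in[0,1)$ be fixed, and let $z^{(1)},\dots,z^{(T)}$ be (random) iterates produced by a base optimizer, with $x^{(1)}=z^{(1)}$, $y^{(t)}=\mu_y x^{(t)}+(1-\mu_y)z^{(t)}$, $x^{(t+1)}=\mu_x x^{(t)}+(1-\mu_x)z^{(t+1)}$, and $\bar{x}^{(T)}=\frac1T\sum_{t=1}^T x^{(t)}$. Assume the base optimizer satisfies the regret guarantee $\sum_{t=1}^T\mathbb{E}[\langle\nabla F(y^{(t)}),z^{(t)}-x_*\rangle]=\mathcal{O}(\sqrt{T})$. Then $$\mathbb{E}[F(\bar{x}^{(T)})-F(x_* )]=\mathcal{O}\Big(\frac{1}{\sqrt T}\Big).$$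
   Context: This is the Generalized Primal Averaging (GPA) framework applied on top of an arbitrary base optimizer generating $z^{(t)}$; $\mathbb{E}[F(x^{(1)})-F(x_* )]$ is assumed finite and $\mu_x,\mu_y$ do not depend on $T$. *)

From HB Require Import structures.
From mathcomp Require Import all_boot all_order all_algebra.
From mathcomp Require Import all_classical all_reals all_analysis.
Set Implicit Arguments. Unset Strict Implicit. Unset Printing Implicit Defensive.
Import Order.TTheory GRing.Theory Num.Theory.
Import numFieldNormedType.Exports.
Local Open Scope classical_set_scope.
Local Open Scope ring_scope.

Definition dotv (R : realType) (n : nat) (u v : 'rV[R]_n) : R :=
  \sum_(i < n) u 0 i * v 0 i.

Definition gradient (R : realType) (n : nat) (F : 'rV[R]_n -> R) (x : 'rV[R]_n)
  : 'rV[R]_n := \row_(i < n) ('d F x (delta_mx 0 i : 'rV[R]_n)).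

Definition convex_fn (R : realType) (n : nat) (F : 'rV[R]_n -> R) : Prop :=
  forall (x y : 'rV[R]_n) (l : R), 0 <= l -> l <= 1 ->
    F (l *: x + (1 - l) *: y) <= l * F x + (1 - l) * F y.

(* GPA iterates (0-based: index t here is t+1 in the paper).
   x 0 = z 0,  x (t+1) = mu_x x t + (1 - mu_x) z (t+1). *)
Fixpoint gpa_x (R : realType) (n : nat) (Omega : Type) (mux : R)
  (z : nat -> Omega -> 'rV[R]_n) (t : nat) (w : Omega) : 'rV[R]_n :=
  match t with
  | 0 => z 0%N w
  | t'.+1 => mux *: gpa_x mux z t' w + (1 - mux) *: z t'.+1 w
  end.

Definition gpa_y (R : realType) (n : nat) (Omega : Type) (mux muy : R)
  (z : nat -> Omega -> 'rV[R]_n) (t : nat) (w : Omega) : 'rV[R]_n :=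
  muy *: gpa_x mux z t w + (1 - muy) *: z t w.

Definition gpa_xbar (R : realType) (n : nat) (Omega : Type) (mux : R)
  (z : nat -> Omega -> 'rV[R]_n) (T : nat) (w : Omega) : 'rV[R]_n :=
  (T%:R)^-1 *: \sum_(t < T) gpa_x mux z t w.

Definition iid_seq (d : measure_display) (Omega : measurableType d)
  (R : realType) (P : probability Omega R)
  (dX : measure_display) (X : measurableType dX) (xi : nat -> Omega -> X) : Prop :=
  [/\ (forall i, measurable_fun setT (xi i)),
      (forall (s : seq nat) (A : nat -> set X), uniq s ->
         (forall i, measurable (A i)) ->
         P (\bigcap_(i in [set` s]) (xi i @^-1` A i)) =
         (\prod_(i <- s) P (xi i @^-1` A i))%E) &
      (forall i (A : set X), measurable A ->
         P (xi i @^-1` A) = P (xi 0%N @^-1` A))].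

From HB Require Import structures.
From mathcomp Require Import all_boot all_order all_algebra.
From mathcomp Require Import all_classical all_reals all_analysis.
From mathcomp Require Import ring lra.
Set Implicit Arguments.
Unset Strict Implicit.
Unset Printing Implicit Defensive.
Import Order.TTheory GRing.Theory Num.Theory.
Import numFieldNormedType.Exports.
Local Open Scope classical_set_scope.
Local Open Scope ring_scope.

(* With p = mu_x mu_y, y^(t+1) = p x^(t) + (1 - p) z^(t+1), so x^(t+1) is a
   convex combination of x^(t) and y^(t+1).  Convexity at x^(t+1) and the
   gradient inequality at y^(t+1), taken towards x^(t) and x_star, combine into
     F(x^(t+1)) - F_star <= mu_x (F(x^(t)) - F_star)
                            + (1 - mu_x) <grad F(y^(t+1)), z^(t+1) - x_star>,
   which telescopes: sum_t (F(x^(t)) - F_star) is at most the regret sum plus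
   mu_x / (1 - mu_x) times its first term.  Jensen's inequality bounds
   F(xbar^(T)) by the average of the F(x^(t)); taking expectations and dividing
   the O(sqrt T) regret by T gives the rate. *)

Section convex_differentiable.
Variables (R : realType) (n : nat) (F : 'rV[R]_n -> R).
Hypothesis cF : convex_fn F.

Lemma dotv_gradient x v : dotv (gradient F x) v = 'd F x v.
Proof.
rewrite [in RHS](row_sum_delta v) linear_sum /dotv; apply: eq_bigr => i _.
by rewrite linearZ /= mxE mulrC.
Qed.

Lemma convex_sub_le_diff x y : differentiable F x -> F x - F y <= 'd F x (x - y).
Proof.
move=> dFx; rewrite -[x - y]opprB linearN /= lerNr opprB -deriveE //.
pose q h : R := h^-1 *: ((F \o shift x) (h *: (y - x)) - F x).
have q_cvg : q @ 0^' --> 'D_(y - x) F x := diff_derivable dFx.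
(* On (0, 1], convexity bounds the difference quotient q by F y - F x. *)
apply: (cvgr_to_le (cvg_dnbhs_at_right q_cvg)); near=> h.
have h0 : 0 < h by near: h; exact: nbhs_right_gt.
have h1 : h <= 1 by near: h; exact: nbhs_right_le.
have := @cF y x h (ltW h0) h1.
have -> : h *: y + (1 - h) *: x = h *: (y - x) + x.
  by apply/rowP => i; rewrite !mxE; ring.
rewrite /q /= -[h^-1 *: _]/(h^-1 * _) [h^-1 * _]mulrC ler_pdivrMr //; nra.
Unshelve. all: by end_near. Qed.

Lemma convex_fn_mean_le (x : nat -> 'rV[R]_n) T :
  F (T.+1%:R^-1 *: \sum_(t < T.+1) x t) <= T.+1%:R^-1 * \sum_(t < T.+1) F (x t).
Proof.
elim: T => [|T IH].
  by rewrite !big_ord_recr !big_ord0 /= invr1 scale1r mul1r !add0r.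
rewrite big_ord_recr (big_ord_recr T.+1 (fun t => F (x t))) /=.
set S := \sum_(t < T.+1) x t; set SF := \sum_(t < T.+1) F (x t).
pose l : R := T.+1%:R / T.+2%:R.
have l0 : 0 <= l by rewrite divr_ge0.
have l1 : l <= 1 by rewrite ler_pdivrMr ?ltr0n // mul1r ler_nat.
have -> : T.+2%:R^-1 *: (S + x T.+1) = l *: (T.+1%:R^-1 *: S) + (1 - l) *: x T.+1.
  by apply/rowP => i; rewrite /l !mxE; field; rewrite nat1r -natrD !pnatr_eq0.
apply: le_trans (cF _ _ l0 l1) _.
have -> : T.+2%:R^-1 * (SF + F (x T.+1)) = l * (T.+1%:R^-1 * SF) + (1 - l) * F (x T.+1).
  by rewrite /l; field; rewrite nat1r -natrD !pnatr_eq0.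
by rewrite lerD2r ler_wpM2l.
Qed.

End convex_differentiable.

Lemma sum_le_of_contraction (R : realFieldType) (h g : nat -> R) (mu : R) T :
  0 <= mu -> mu < 1 -> 0 <= h T -> h 0%N <= g 0%N ->
  (forall t, h t.+1 - mu * h t <= (1 - mu) * g t.+1) ->
  \sum_(t < T.+1) h t <= \sum_(t < T.+1) g t + mu / (1 - mu) * g 0%N.
Proof.
move=> mu0 mu1 hT0 h0 hS.
have telescope : (1 - mu) * \sum_(t < T.+1) h t + mu * h T <=
                 (1 - mu) * \sum_(t < T.+1) g t + mu * g 0%N.
  elim: T {hT0} => [|T IH]; first by rewrite !big_ord1; lra.
  rewrite !(big_ord_recr T.+1) /=; have := hS T; lra.
have mu1' : 0 < 1 - mu by rewrite subr_gt0.
rewrite -(ler_pM2l mu1') mulrDr mulrA [_ * (mu / _)]mulrC divfK ?gt_eqF //.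
have := mulr_ge0 mu0 hT0; lra.
Qed.

Section gpa.
Variables (R : realType) (n : nat) (F : 'rV[R]_n -> R).
Hypotheses (cF : convex_fn F) (dF : forall x, differentiable F x).

Lemma gpa_step_le (mux muy : R) (xs a z : 'rV[R]_n) :
  0 <= mux -> mux < 1 -> 0 <= muy -> muy <= 1 ->
  F (mux *: a + (1 - mux) *: z) - F xs - mux * (F a - F xs) <=
  (1 - mux) * 'd F (muy *: (mux *: a + (1 - mux) *: z) + (1 - muy) *: z) (z - xs).
Proof.
move=> mux0 mux1 muy0 muy1.
set b := mux *: a + (1 - mux) *: z; set y := muy *: b + (1 - muy) *: z.
set p := muy * mux.
have p0 : 0 <= p by rewrite mulr_ge0.
have pmux : p <= mux by rewrite /p ler_piMl.
have p1 : 0 < 1 - p by rewrite subr_gt0 (le_lt_trans pmux).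
have p1' : 1 - p != 0 by rewrite gt_eqF.
have ey : y = p *: a + (1 - p) *: z by apply/rowP => i; rewrite /y /b /p !mxE; ring.
pose l := (mux - p) / (1 - p).
have l0 : 0 <= l by apply: divr_ge0; [rewrite subr_ge0 | exact: ltW].
have l1 : l <= 1 by rewrite /l ler_pdivrMr // mul1r lerD2r ltW.
have eb : b = l *: a + (1 - l) *: y by apply/rowP => i; rewrite ey /b /l !mxE; field.
have Fb : (1 - p) * F b <= (mux - p) * F a + (1 - mux) * F y.
  have -> : (mux - p) * F a + (1 - mux) * F y = (1 - p) * (l * F a + (1 - l) * F y).
    by rewrite /l; field.
  by rewrite ler_pM2l // eb; apply: cF.
have grad_a := convex_sub_le_diff cF a (dF y).
have grad_xs := convex_sub_le_diff cF xs (dF y).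
have lin : p * 'd F y (y - a) + (1 - p) * 'd F y (y - xs) = (1 - p) * 'd F y (z - xs).
  have dZ c v : c * 'd F y v = 'd F y (c *: v) by rewrite linearZ.
  rewrite !dZ -linearD; congr ('d F y _).
  by apply/rowP => i; rewrite ey !mxE; ring.
have r0 : 0 <= 1 - mux by rewrite subr_ge0 ltW.
have := ler_wpM2l r0 (lerD (ler_wpM2l p0 grad_a) (ler_wpM2l (ltW p1) grad_xs)).
rewrite lin => key; rewrite -(ler_pM2l p1); lra.
Qed.

Lemma gpa_gap_le (Omega : Type) (mux muy : R) (z : nat -> Omega -> 'rV[R]_n)
    (xs : 'rV[R]_n) (w : Omega) T :
  0 <= mux -> mux < 1 -> 0 <= muy -> muy <= 1 -> (forall x, F xs <= F x) ->
  F (gpa_xbar mux z T.+1 w) - F xs <=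
  T.+1%:R^-1 * (\sum_(t < T.+1) 'd F (gpa_y mux muy z t w) (z t w - xs)
                + mux / (1 - mux) * 'd F (gpa_y mux muy z 0 w) (z 0%N w - xs)).
Proof.
move=> mux0 mux1 muy0 muy1 Fmin.
pose h t := F (gpa_x mux z t w) - F xs.
pose g t := 'd F (gpa_y mux muy z t w) (z t w - xs).
have h0 : h 0%N <= g 0%N.
  have y0 : gpa_y mux muy z 0 w = z 0%N w by apply/rowP => i; rewrite !mxE; ring.
  by rewrite /h /g y0; apply: convex_sub_le_diff.
have hS t : h t.+1 - mux * h t <= (1 - mux) * g t.+1.
  exact: gpa_step_le xs (gpa_x mux z t w) (z t.+1 w) mux0 mux1 muy0 muy1.
have hT : 0 <= h T by rewrite subr_ge0.
have sum_le := sum_le_of_contraction mux0 mux1 hT h0 hS.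
apply: le_trans (lerB (convex_fn_mean_le cF (fun t => gpa_x mux z t w) T) (lexx _)) _.
have -> : T.+1%:R^-1 * \sum_(t < T.+1) F (gpa_x mux z t w) - F xs =
          T.+1%:R^-1 * \sum_(t < T.+1) h t.
  rewrite sumrB sumr_const card_ord -[F xs *+ _]mulr_natl mulrBr mulrA.
  by rewrite mulVf ?pnatr_eq0 // mul1r.
by rewrite ler_wpM2l ?invr_ge0.
Qed.

End gpa.

(* No measurability is needed: the integral of a nonnegative function is the
   supremum of the integrals of the simple functions below it. *)
Lemma ge0_le_integralT d (T : measurableType d) (R : realType)
    (mu : {measure set T -> \bar R}) (f g : T -> \bar R) :
  (forall x, (0 <= f x)%E) -> (forall x, (f x <= g x)%E) ->
  (\int[mu]_x f x <= \int[mu]_x g x)%E.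
Proof.
move=> f0 fg; have g0 x := le_trans (f0 x) (fg x).
rewrite !ge0_integralTE //; apply: ereal_sup_le => _ [h hf <-].
by exists h => // x; exact: le_trans (hf x) (fg x).
Qed.

Lemma mean_le_div_sqrt (R : rcfType) (A B C : R) T :
  `|A| <= C * Num.sqrt T.+1%:R ->
  T.+1%:R^-1 * (A + B) <= (C + `|B|) / Num.sqrt T.+1%:R.
Proof.
set s := Num.sqrt _ => AC.
have s0 : 0 < s by rewrite sqrtr_gt0 ltr0n.
have ss : T.+1%:R = s * s by rewrite -expr2 sqr_sqrtr ?ler0n.
have s1 : 1 <= s by rewrite -sqrtr1 ler_sqrt ?ler1n.
rewrite ss invfM -mulrA [X in _ <= X]mulrC ler_pM2l ?invr_gt0 // ler_pdivrMl //.
have := ler_norm A; have := ler_norm B; have := normr_ge0 B; nra.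
Qed.

Theorem corollary1
  (R : realType) (n : nat) (F : 'rV[R]_n -> R) (xstar : 'rV[R]_n)
  (d : measure_display) (Omega : measurableType d) (P : probability Omega R)
  (dX : measure_display) (X : measurableType dX) (xi : nat -> Omega -> X)
  (mux muy : R) (z : nat -> Omega -> 'rV[R]_n) :
  convex_fn F ->
  (forall x, differentiable F x) ->
  (forall x, F xstar <= F x) ->
  iid_seq P xi ->
  0 <= mux -> mux < 1 -> 0 <= muy -> muy < 1 ->
  (* the base optimizer produces z^(t) from xi^(1), ..., xi^(t-1) *)
  (forall t : nat, exists g : ('I_(t) -> X) -> 'rV[R]_n,
      forall w, z t w = g (fun s : 'I_(t) => xi (nat_of_ord s) w)) ->
  (forall (t : nat) (i : 'I_n), measurable_fun setT (fun w => z t w 0 i)) ->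
  (* E[F(x^(1)) - F(x_star)] is finite *)
  (\int[P]_w ((F (gpa_x mux z 0 w) - F xstar)%:E) < +oo)%E ->
  (* the expectations in the regret guarantee exist (are finite) *)
  (forall t : nat, P.-integrable setT
     (fun w => (dotv (gradient F (gpa_y mux muy z t w)) (z t w - xstar))%:E)) ->
  (* regret guarantee: sum_{t=1}^T E[<grad F(y^(t)), z^(t) - x_star>] = O(sqrt T) *)
  (exists (C : R) (T0 : nat), forall T : nat, (T0 <= T)%N ->
     `| \sum_(t < T) fine (\int[P]_w
           ((dotv (gradient F (gpa_y mux muy z t w)) (z t w - xstar))%:E)) |
     <= C * Num.sqrt (T%:R)) ->
  (* conclusion: E[F(xbar^(T)) - F(x_star)] = O(1 / sqrt T) *)
  exists (C : R) (T0 : nat), forall T : nat, (T0 <= T)%N -> (0 < T)%N ->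
    (\int[P]_w ((F (gpa_xbar mux z T w) - F xstar)%:E)
       <= (C / Num.sqrt (T%:R))%:E)%E.
Proof.
(* The bound holds pathwise. *)
move=> cF dF Fmin _ mux0 mux1 muy0 muy1 _ _ _ ip_int [C [T0 regret]].
pose ip t w := dotv (gradient F (gpa_y mux muy z t w)) (z t w - xstar).
pose I t := fine (\int[P]_w (ip t w)%:E).
pose K := mux / (1 - mux).
exists (C + `|K * I 0%N|), T0 => -[//|T] T0T _.
have {}ip_int t : P.-integrable setT (fun w => (ip t w)%:E) := ip_int t.
have int_ip t : (\int[P]_w (ip t w)%:E = (I t)%:E)%E.
  by rewrite /I fineK; last exact: integrable_fin_num.
pose bound w := (T.+1%:R^-1%:E *
  (\sum_(t < T.+1) (ip t w)%:E + K%:E * (ip 0%N w)%:E))%E.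
apply: le_trans (@ge0_le_integralT _ _ _ P _ bound _ _) _.
- by move=> w; rewrite lee_fin subr_ge0 Fmin.
- move=> w; rewrite /bound sumEFin -!EFinM lee_fin.
  have := gpa_gap_le cF dF z w T mux0 mux1 muy0 (ltW muy1) Fmin.
  by under eq_bigr do rewrite -dotv_gradient; rewrite -dotv_gradient.
have int_sum : P.-integrable setT (fun w => \sum_(t < T.+1) (ip t w)%:E).
  exact: integrable_sum.
have int_K0 : P.-integrable setT (fun w => (K%:E * (ip 0%N w)%:E)%E).
  exact: integrableZl.
rewrite /bound integralZl ?integralD ?integral_sum ?integralZl //; last exact: integrableD.
under eq_bigr do rewrite int_ip.
rewrite int_ip sumEFin -EFinM lee_fin.
exact: mean_le_div_sqrt _ (regret _ T0T).
Qed.
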